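(* Let $A$ be an aggregation function having $1$ as a (two-sided) neutral element, let $I_A(x,y)=\sup\{t\in[0,1]\mid A(x,t)\le y\}$ be the R-implication generated by $A$, and let $A'$ be a conjunctor having $1$ as a left neutral element. Suppose $I_A$ satisfies the ordering property $I_A(x,y)=1\iff x\le y$ and the exchange principle $I_A(x,I_A(y,z))=I_A(y,I_A(x,z))$ for all $x,y,z\in[0,1]$. Then $I_A$ satisfies (A5) with $A'$ if and only if $A'\le A^*$, where $$A^*(x,y)=\begin{cases}\sup\{A(u,v)\mid u<x,\ v<y\}& x,y\in(0,1),\\ A(x,y)&\text{otherwise.}\end{cases}$$
   Context: An aggregation function is a map $A:[0,1]^2\to[0,1]$, non-decreasing in each variable, with $A(0,0)=0$, $A(1,1)=1$; it is a conjunctor if moreover $A(1,0)=A(0,1)=0$. $1$ is a neutral element if $A(1,x)=A(x,1)=x$ for all $x$, and a left neutral element if $A(1,x)=x$ for all $x$. $A'\le A^*$ means pointwise inequality. A fuzzy set on a nonempty set $U$ is a map $U\to[0,1]$; it is normal if it attains the value $1$. ''$I$ satisfies (A5) with $A'$'' means: for all nonempty sets $U,V$, all normal fuzzy sets $D$ on $U$, $B$ on $V$, and every $y\in V$, $\sup_{x\in U}A'(D(x),I(D(x),B(y)))=B(y)$. *)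

From Stdlib Require Import Reals.
Open Scope R_scope.

Definition unit01 (x : R) : Prop := 0 <= x <= 1.

(* aggregation function on [0,1]^2 (values outside [0,1]^2 are irrelevant) *)
Definition aggregation (A : R -> R -> R) : Prop :=
  (forall x y, unit01 x -> unit01 y -> unit01 (A x y)) /\
  (forall x1 x2 y, unit01 x1 -> unit01 x2 -> unit01 y -> x1 <= x2 -> A x1 y <= A x2 y) /\
  (forall x y1 y2, unit01 x -> unit01 y1 -> unit01 y2 -> y1 <= y2 -> A x y1 <= A x y2) /\
  A 0 0 = 0 /\ A 1 1 = 1.

Definition conjunctor (A : R -> R -> R) : Prop :=
  aggregation A /\ A 1 0 = 0 /\ A 0 1 = 0.

Definition neutral_one (A : R -> R -> R) : Prop :=
  forall x, unit01 x -> A 1 x = x /\ A x 1 = x.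

Definition left_neutral_one (A : R -> R -> R) : Prop :=
  forall x, unit01 x -> A 1 x = x.

Definition is_R_implication (A I : R -> R -> R) : Prop :=
  forall x y, unit01 x -> unit01 y ->
    is_lub (fun t => unit01 t /\ A x t <= y) (I x y).

Definition is_Astar (A Astar : R -> R -> R) : Prop :=
  forall x y, unit01 x -> unit01 y ->
    ((0 < x < 1 /\ 0 < y < 1) ->
       is_lub (fun z => exists u v, unit01 u /\ unit01 v /\ u < x /\ v < y /\ z = A u v)
              (Astar x y)) /\
    (~ (0 < x < 1 /\ 0 < y < 1) -> Astar x y = A x y).

Definition ordering_property (I : R -> R -> R) : Prop :=
  forall x y, unit01 x -> unit01 y -> (I x y = 1 <-> x <= y).

Definition exchange_principle (I : R -> R -> R) : Prop :=
  forall x y z, unit01 x -> unit01 y -> unit01 z -> I x (I y z) = I y (I x z).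

Definition fuzzy_set (U : Type) (D : U -> R) : Prop := forall u, unit01 (D u).
Definition normal_fs (U : Type) (D : U -> R) : Prop := exists u, D u = 1.

Definition satisfies_A5 (I A' : R -> R -> R) : Prop :=
  forall (U V : Type), inhabited U -> inhabited V ->
  forall (D : U -> R) (B : V -> R),
    fuzzy_set U D -> normal_fs U D -> fuzzy_set V B -> normal_fs V B ->
    forall y : V,
      is_lub (fun z => exists x : U, z = A' (D x) (I (D x) (B y))) (B y).

Definition le_fun2 (F G : R -> R -> R) : Prop :=
  forall x y, unit01 x -> unit01 y -> F x y <= G x y.

(** The generalized modus ponens [A' a (I a b) <= b] is exactly (A5) with [A'],
    because [I 1 b = b], [A' 1 x = x], and the fuzzy sets witnessing (A5) may
    take any pair of values besides [1].  Residuation bounds [A*(a, I a b)] by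
    [b], so [A' <= A*] gives modus ponens.  Conversely [y <= I x (A* x y)]:
    every [A u v] with [u < x], [v < y] is below [A* x y], so [v <= I u (A* x y)];
    passing to the supremum in [v] and [u] via the exchange principle (which,
    with the ordering property, makes [a <= I b c] symmetric in [a], [b]) gives
    the claim, and modus ponens then yields [A' x y <= A' x (I x (A* x y)) <= A* x y]. *)

From Stdlib Require Import Reals Lra Classical.
Open Scope R_scope.

Local Ltac unit01_lra := unfold unit01 in *; lra.

Lemma le_of_forall_lt_le (y c : R) :
  y <= 1 -> 0 <= c -> (forall v, unit01 v -> v < y -> v <= c) -> y <= c.
Proof.
  intros Hy1 Hc Hlt.
  destruct (Rle_dec y c) as [|Hyc]; [assumption|].
  assert (Hmid : (y + c) / 2 <= c) by (apply Hlt; unit01_lra).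
  lra.
Qed.

Lemma not_interior_cases (x y : R) : unit01 x -> unit01 y ->
  ~ (0 < x < 1 /\ 0 < y < 1) -> x = 0 \/ x = 1 \/ y = 0 \/ y = 1.
Proof.
  intros Hx Hy Hb.
  destruct (Req_dec x 0); auto. destruct (Req_dec x 1); auto.
  destruct (Req_dec y 0); auto. destruct (Req_dec y 1); auto.
  exfalso; apply Hb; unit01_lra.
Qed.

Lemma satisfies_A5_iff_modus_ponens (I A' : R -> R -> R) :
  (forall b, unit01 b -> I 1 b = b) -> left_neutral_one A' ->
  (satisfies_A5 I A' <-> forall a b, unit01 a -> unit01 b -> A' a (I a b) <= b).
Proof.
  intros I_1_l HL. split.
  - intros H5 a b Ha Hb.
    set (D := fun u : bool => if u then 1 else a).
    set (B := fun v : bool => if v then b else 1).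
    assert (HD : fuzzy_set bool D) by (intros []; unfold D; unit01_lra).
    assert (HB : fuzzy_set bool B) by (intros []; unfold B; unit01_lra).
    destruct (H5 bool bool (inhabits true) (inhabits true) D B HD
                (ex_intro _ true eq_refl) HB (ex_intro _ false eq_refl) true)
      as [Hub _].
    apply Hub. exists false. reflexivity.
  - intros Hmp U V _ _ D B HD [u1 Hu1] HB _ y. split.
    + intros z [x ->]. apply Hmp; auto.
    + intros m Hm. apply Hm. exists u1.
      rewrite Hu1, I_1_l, HL by auto. reflexivity.
Qed.

Section Residuation.

Variables (A I : R -> R -> R).
Hypotheses (HA : aggregation A) (HN : neutral_one A) (HI : is_R_implication A I).

Lemma A_unit01 x y : unit01 x -> unit01 y -> unit01 (A x y).
Proof. apply HA. Qed.

Lemma A_mono_l x1 x2 y :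
  unit01 x1 -> unit01 x2 -> unit01 y -> x1 <= x2 -> A x1 y <= A x2 y.
Proof. apply HA. Qed.

Lemma A_mono_r x y1 y2 :
  unit01 x -> unit01 y1 -> unit01 y2 -> y1 <= y2 -> A x y1 <= A x y2.
Proof. apply HA. Qed.

Lemma A_1_l x : unit01 x -> A 1 x = x.
Proof. apply HN. Qed.

Lemma A_1_r x : unit01 x -> A x 1 = x.
Proof. apply HN. Qed.

Lemma A_0_l y : unit01 y -> A 0 y = 0.
Proof.
  intros Hy. apply Rle_antisym.
  - rewrite <- (A_1_r 0) at 2 by unit01_lra. apply A_mono_r; unit01_lra.
  - apply A_unit01; unit01_lra.
Qed.

Lemma A_0_r x : unit01 x -> A x 0 = 0.
Proof.
  intros Hx. apply Rle_antisym.
  - rewrite <- (A_1_l 0) at 2 by unit01_lra. apply A_mono_l; unit01_lra.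
  - apply A_unit01; unit01_lra.
Qed.

Lemma le_I_of_A_le a b v :
  unit01 a -> unit01 b -> unit01 v -> A a v <= b -> v <= I a b.
Proof. intros Ha Hb Hv Hle. apply (HI a b Ha Hb). split; assumption. Qed.

Lemma I_le a b c : unit01 a -> unit01 b ->
  (forall t, unit01 t -> A a t <= b -> t <= c) -> I a b <= c.
Proof. intros Ha Hb Hc. apply (HI a b Ha Hb). intros t [Ht Hle]. auto. Qed.

Lemma I_unit01 a b : unit01 a -> unit01 b -> unit01 (I a b).
Proof.
  intros Ha Hb. split.
  - apply le_I_of_A_le; try unit01_lra. rewrite A_0_r by assumption. apply Hb.
  - apply I_le; auto. intros t Ht _. apply Ht.
Qed.

Lemma I_1_l b : unit01 b -> I 1 b = b.
Proof.
  intros Hb. apply Rle_antisym.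
  - apply I_le; try unit01_lra. intros t Ht. rewrite A_1_l by assumption. auto.
  - apply le_I_of_A_le; try unit01_lra. rewrite A_1_l by assumption. lra.
Qed.

Lemma A_le_of_lt_I a b v :
  unit01 a -> unit01 b -> unit01 v -> v < I a b -> A a v <= b.
Proof.
  intros Ha Hb Hv Hlt.
  destruct (classic (exists t, (unit01 t /\ A a t <= b) /\ v < t))
    as [[t [[Ht Hab] Hvt]] | Hnone].
  - eapply Rle_trans; [|exact Hab]. apply A_mono_r; auto; lra.
  - exfalso. assert (Hv_ub : I a b <= v); [|lra].
    apply I_le; auto. intros t Ht Hab.
    apply Rnot_lt_le. intros Hvt. apply Hnone. exists t. auto.
Qed.

Hypotheses (HO : ordering_property I) (HE : exchange_principle I).

Lemma le_I_swap a b c :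
  unit01 a -> unit01 b -> unit01 c -> a <= I b c -> b <= I a c.
Proof.
  intros Ha Hb Hc Hle.
  apply (HO b (I a c) Hb (I_unit01 a c Ha Hc)).
  rewrite <- HE by assumption.
  apply (HO a (I b c) Ha (I_unit01 b c Hb Hc)), Hle.
Qed.

Variable Astar : R -> R -> R.
Hypothesis HS : is_Astar A Astar.

Lemma A_le_Astar x y u v : 0 < x < 1 /\ 0 < y < 1 ->
  unit01 u -> unit01 v -> u < x -> v < y -> A u v <= Astar x y.
Proof.
  intros Hi Hu Hv Hux Hvy.
  apply (proj1 (HS x y ltac:(unit01_lra) ltac:(unit01_lra)) Hi).
  exists u, v. auto 6.
Qed.

Lemma Astar_unit01 x y : unit01 x -> unit01 y -> unit01 (Astar x y).
Proof.
  intros Hx Hy. destruct (HS x y Hx Hy) as [Hint Hext].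
  destruct (classic (0 < x < 1 /\ 0 < y < 1)) as [Hi|Hi].
  - split.
    + rewrite <- (A_0_l 0) by unit01_lra. apply A_le_Astar; unit01_lra.
    + apply (Hint Hi). intros z (u & v & Hu & Hv & _ & _ & ->).
      apply A_unit01; assumption.
  - rewrite (Hext Hi). apply A_unit01; assumption.
Qed.

Lemma Astar_I_le a b : unit01 a -> unit01 b -> Astar a (I a b) <= b.
Proof.
  intros Ha Hb.
  assert (Ht : unit01 (I a b)) by (apply I_unit01; assumption).
  destruct (HS a (I a b) Ha Ht) as [Hint Hext].
  destruct (classic (0 < a < 1 /\ 0 < I a b < 1)) as [Hi|Hi].
  - apply (Hint Hi). intros z (u & v & Hu & Hv & Hua & Hvt & ->).
    eapply Rle_trans; [|apply (A_le_of_lt_I a b v); assumption].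
    apply A_mono_l; auto; lra.
  - rewrite (Hext Hi).
    destruct (not_interior_cases a (I a b) Ha Ht Hi) as [E|[E|[E|E]]];
      rewrite E in *.
    + rewrite A_0_l by assumption. apply Hb.
    + rewrite I_1_l, A_1_l by assumption. lra.
    + rewrite A_0_r by assumption. apply Hb.
    + rewrite A_1_r by assumption. apply (HO a b Ha Hb), E.
Qed.

Lemma le_I_Astar x y : unit01 x -> unit01 y -> y <= I x (Astar x y).
Proof.
  intros Hx Hy.
  assert (Hs : unit01 (Astar x y)) by (apply Astar_unit01; assumption).
  destruct (classic (0 < x < 1 /\ 0 < y < 1)) as [Hi|Hi].
  - apply le_I_swap; auto.
    apply le_of_forall_lt_le; [unit01_lra | apply I_unit01; auto |].
    intros u Hu Hux. apply le_I_swap; auto.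
    apply le_of_forall_lt_le; [unit01_lra | apply I_unit01; auto |].
    intros v Hv Hvy. apply le_I_of_A_le; auto.
    apply A_le_Astar; assumption.
  - rewrite (proj2 (HS x y Hx Hy) Hi) in *.
    apply le_I_of_A_le; auto. lra.
Qed.

End Residuation.

Theorem theorem4p6 (A I A' Astar : R -> R -> R) :
  aggregation A -> neutral_one A ->
  is_R_implication A I ->
  conjunctor A' -> left_neutral_one A' ->
  ordering_property I -> exchange_principle I ->
  is_Astar A Astar ->
  (satisfies_A5 I A' <-> le_fun2 A' Astar).
Proof.
  intros HA HN HI [HA' _] HL HO HE HS.
  pose proof (I_unit01 A I HA HN HI) as I_unit01.
  rewrite satisfies_A5_iff_modus_ponens by (auto; apply (I_1_l A I HN HI)).
  split.
  - intros Hmp x y Hx Hy.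
    pose proof (Astar_unit01 A HA HN Astar HS x y Hx Hy) as Hs.
    eapply Rle_trans; [|apply (Hmp x (Astar x y) Hx Hs)].
    apply (A_mono_r A' HA'); auto.
    apply (le_I_Astar A I HA HN HI HO HE Astar HS); assumption.
  - intros Hle a b Ha Hb.
    eapply Rle_trans; [apply Hle; auto |].
    apply (Astar_I_le A I HA HN HI HO Astar HS); assumption.
Qed.
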